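(* Suppose $n\geq 4$ and $1\leq d\leq n-1$, and let $N=|\Omega_{n,d}|$. The smallest eigenvalue $\lambda_{N-1}$ of the transition matrix of the switch chain on $\Omega_{n,d}$ satisfies \[ (1+\lambda_{N-1})^{-1}\leq \tfrac14\, d^2n^2. \]
   Context: $\Omega_{n,d}$ is the set of simple digraphs on $[n]$ in which every vertex has in-degree and out-degree $d$. The switch chain: from $G$, choose an unordered pair of distinct arcs $\{(i,j),(k,\ell)\}$ uniformly at random; if $|\{i,j,k,\ell\}|=4$ and neither $(i,\ell)$ nor $(k,j)$ is an arc of $G$, replace $(i,j),(k,\ell)$ by $(i,\ell),(k,j)$; otherwise stay at $G$. Its transition matrix is symmetric, with real eigenvalues $1=\lambda_0>\lambda_1\geq\cdots\geq\lambda_{N-1}\geq-1$. *)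

From HB Require Import structures.
From mathcomp Require Import all_boot all_order all_algebra.
Set Implicit Arguments. Unset Strict Implicit. Unset Printing Implicit Defensive.
Import Order.TTheory GRing.Theory Num.Theory.

Definition arc (n : nat) := ('I_n * 'I_n)%type.

(* Simple digraph (no loops; no multiple arcs, automatic for sets) in which
   every vertex has out-degree d and in-degree d. *)
Definition is_regdigraph (n d : nat) (G : {set arc n}) : bool :=
  [&& [forall v : 'I_n, (v, v) \notin G],
      [forall v : 'I_n, #|[set w : 'I_n | (v, w) \in G]| == d] &
      [forall v : 'I_n, #|[set u : 'I_n | (u, v) \in G]| == d]].
Arguments is_regdigraph : clear implicits.

Notation Omega n d := {G : {set arc n} | is_regdigraph n d G}.

Definition switch (n : nat) (G : {set arc n}) (a b : arc n) : {set arc n} :=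
  let: (i, j) := a in let: (k, l) := b in
  if [&& uniq [:: i; j; k; l], (i, l) \notin G & (k, j) \notin G]
  then ((G :\ a) :\ b) :|: [set (i, l); (k, j)]
  else G.

(* Number of ordered pairs (a,b) of distinct arcs of G whose switch gives H.
   Since the switch is symmetric in (a,b), this is twice the number of
   unordered pairs {a,b} leading from G to H. *)
Definition nswitch (n : nat) (G H : {set arc n}) : nat :=
  #|[set ab : arc n * arc n |
      [&& ab.1 \in G, ab.2 \in G, ab.1 != ab.2 & switch G ab.1 ab.2 == H]]|.

(* Each G in Omega has m = d*n arcs; an unordered pair of distinct arcs is
   chosen uniformly among 'C(m,2) = m(m-1)/2 pairs, i.e. probability
   (#ordered pairs)/(m(m-1)). *)
Definition switch_mx (R : numFieldType) (n d : nat) : 'M[R]_#|{: Omega n d}| :=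
  \matrix_(i, j)
    ((nswitch (val (enum_val i)) (val (enum_val j)))%:R
       / ((d * n) * (d * n).-1)%:R)%R.
Arguments switch_mx : clear implicits.

From Pilot Require Import Defs.
From HB Require Import structures.
From mathcomp Require Import all_boot all_order all_algebra lra.
Set Implicit Arguments. Unset Strict Implicit. Unset Printing Implicit Defensive.
Import Order.TTheory GRing.Theory Num.Theory.
(* Re-export Defs last, so that [arc] denotes Defs.arc and not path.arc. *)
Import Pilot.Defs.

(* The transition matrix P of the switch chain is nonnegative, and the
   bound follows from Gershgorin's disc theorem for the rows of P: every
   eigenvalue lam of P is also an eigenvalue of P^T, whose column discs are
   the row discs of P, so for some state G we have  P(G,G) - sum_{H <> G} P(G,H) <= lam.  Writing
   m = dn for the number of arcs, M = m(m-1), c for the number of ordered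
   arc pairs whose switch is rejected at G and s for the total number of
   ordered pairs of distinct arcs counted in row G, we get
     P(G,G) - sum_{H <> G} P(G,H) = (2c - s)/M.
   Two combinatorial facts finish the proof: s <= M (every counted pair is a
   pair of distinct arcs of G), and c >= 2 (a directed path u -> v -> w of
   G gives the two rejected pairs ((u,v),(v,w)) and ((v,w),(u,v))).  Hence
   lam >= 4/M - 1, i.e. 1 + lam >= 4/M > 0 and (1 + lam)^-1 <= M/4 <= m^2/4. *)

Lemma card_regdigraph n d (G : {set arc n}) :
  is_regdigraph n d G -> #|G| = (d * n)%N.
Proof.
case/and3P=> _ /forallP outdeg _.
rewrite -sum1_card big_mkcond /=.
rewrite (eq_bigr (fun a => ((a.1, a.2) \in G : nat))) => [|[v w] _]; last by case: ifP.
rewrite -(pair_big xpredT xpredT (fun v w => ((v, w) \in G : nat))) /=.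
rewrite (eq_bigr (fun _ => d)) ?sum_nat_const ?card_ord 1?mulnC // => v _.
by rewrite -(eqP (outdeg v)) -sum1_card [RHS]big_mkcond; apply: eq_bigr => w _; rewrite inE.
Qed.

Section SwitchCounting.
Variables (n d : nat) (G : {set arc n}).

Definition distinct_arc_pairs : {set arc n * arc n} :=
  [set ab | [&& ab.1 \in G, ab.2 \in G & ab.1 != ab.2]].

Lemma card_distinct_arc_pairs :
  #|distinct_arc_pairs| = (#|G| * (#|G|).-1)%N.
Proof.
rewrite -sum1_card big_mkcond /=.
rewrite (eq_bigr (fun ab => (fun a b => [&& a \in G, b \in G & a != b] : nat) ab.1 ab.2))
  => [|[a b] _]; last by rewrite inE; case: ifP.
rewrite -(pair_big xpredT xpredT (fun a b => [&& a \in G, b \in G & a != b] : nat)) /=.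
rewrite (bigID (mem G)) /= [X in (_ + X)%N]big1; last first.
  by move=> a /negbTE aG; rewrite big1 // => b _; rewrite aG.
rewrite addn0 -sum_nat_const; apply: eq_bigr => a aG.
rewrite (cardsD1 a G) aG add1n -sum1_card [RHS]big_mkcond; apply: eq_bigr => b _.
by rewrite !inE eq_sym; case: (b == a); case: (b \in G); rewrite ?aG.
Qed.

(* Each pair of distinct arcs leads to at most one state, so the counts of
   moves from G to the various states of Omega add up to at most the number
   of such pairs. *)
Lemma sum_nswitch_le :
  (\sum_(H : Omega n d) nswitch G (val H) <= #|G| * (#|G|).-1)%N.
Proof.
rewrite -card_distinct_arc_pairs.
have nswitchE (H : Omega n d) : nswitch G (val H) =
    (\sum_(ab in distinct_arc_pairs) (switch G ab.1 ab.2 == val H))%N.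
  rewrite /nswitch -sum1_card big_mkcond [RHS]big_mkcond; apply: eq_bigr => ab _.
  by rewrite !inE; case: (ab.1 \in G); case: (ab.2 \in G); case: (ab.1 != ab.2); case: (_ == _).
rewrite (eq_bigr _ (fun H _ => nswitchE H)) exchange_big /=.
apply: (@leq_trans (\sum_(ab in distinct_arc_pairs) 1)); last by rewrite sum1_card.
apply: leq_sum => ab _.
rewrite (eq_bigr (fun H => if switch G ab.1 ab.2 == sval H then 1 else 0)%N);
  last by move=> H _; case: eqP.
rewrite -big_mkcond sum1_card; apply/card_le1_eqP => H1 H2 H1ab H2ab.
have E1 : switch G ab.1 ab.2 = val H1 by apply/eqP.
have E2 : switch G ab.1 ab.2 = val H2 by apply/eqP.
by apply: val_inj; rewrite -E1 -E2.
Qed.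

(* A switch on two consecutive arcs (u,v),(v,w) is always rejected, since the
   four endpoints are not distinct; taking them in both orders shows that at
   least two ordered pairs leave a nonempty regular digraph unchanged. *)
Lemma nswitch_self_ge2 :
  (0 < n)%N -> (0 < d)%N -> is_regdigraph n d G -> (2 <= nswitch G G)%N.
Proof.
move=> n_gt0 d_gt0 /and3P[/forallP loopless /forallP outdeg _].
have out_arc v : exists w, (v, w) \in G.
  have /set0Pn[w] : [set w | (v, w) \in G] != set0.
    by rewrite -card_gt0 (eqP (outdeg v)).
  by rewrite inE; exists w.
pose u : 'I_n := Ordinal n_gt0.
have [v uvG] := out_arc u; have [w vwG] := out_arc v.
have vu : v != u by apply: contraNneq (loopless u) => vu; rewrite -{2}vu.
have uv_vw : (u, v) != (v, w) by rewrite xpair_eqE negb_and eq_sym vu.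
have rejected a b : switch G a b = G -> a \in G -> b \in G -> a != b ->
    (a, b) \in [set ab | [&& ab.1 \in G, ab.2 \in G, ab.1 != ab.2
                            & switch G ab.1 ab.2 == G]].
  by move=> sw aG bG ab; rewrite inE /= aG bG ab sw eqxx.
apply: (@leq_trans #|[set (u, v, (v, w)); (v, w, (u, v))]|).
  by rewrite cards2 xpair_eqE negb_and uv_vw.
apply/subset_leq_card/subsetP => x /set2P[] ->.
  by apply: rejected; rewrite // /switch /= !inE !eqxx /= !andbF.
by apply: rejected; rewrite // 1?eq_sym // /switch /= !inE !eqxx /= ?orbT ?andbF.
Qed.
End SwitchCounting.

Local Open Scope ring_scope.

(* A matrix and its transpose have the same eigenvalues: both are the roots
   of the same determinant. *)
Lemma eigenvalue_trmx (F : fieldType) m (A : 'M[F]_m) a :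
  eigenvalue A a -> eigenvalue A^T a.
Proof.
case/eigenvalueP=> v vA v_neq0.
have /det0P[w w_neq0 wA] : \det (a%:M - A^T) == 0.
  rewrite -det_tr linearB /= tr_scalar_mx trmxK; apply/det0P.
  by exists v; rewrite // mulmxBr vA mul_mx_scalar subrr.
apply/eigenvalueP; exists w => //.
by apply/eqP; rewrite -mul_mx_scalar eq_sym -subr_eq0 -mulmxBr wA.
Qed.

(* Gershgorin's theorem (column discs), lower end: a real eigenvalue of A is
   at least A i i - sum_{j <> i} |A j i| for some i, namely an index where a
   left eigenvector has its largest entry in absolute value. *)
Lemma gershgorin_col_lower (R : realFieldType) m (A : 'M[R]_m) lam :
  eigenvalue A lam -> exists i, A i i - \sum_(j | j != i) `|A j i| <= lam.
Proof.
case/eigenvalueP=> v vA v_neq0.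
have [i0 vi0_neq0] : exists i0, v 0 i0 != 0.
  apply/existsP; apply: contraR v_neq0 => /existsPn v0; apply/eqP/rowP => j.
  by rewrite mxE; apply/eqP/negbNE/v0.
have [i _ vi_max] := @arg_maxP _ _ _ i0 xpredT (fun j => `|v 0 j|) isT.
exists i; set a := v 0 i.
have a_neq0 : a != 0.
  apply: contraNneq vi0_neq0 => a0; rewrite -normr_eq0 eq_le normr_ge0 andbT.
  by have := vi_max i0 isT; rewrite /= -/a a0 normr0.
have aa_gt0 : 0 < a * a by rewrite -expr2 exprn_even_gt0.
have eigen_i : lam * a = \sum_j v 0 j * A j i.
  by move/matrixP: vA => /(_ 0 i); rewrite !mxE.
rewrite -(ler_pM2r aa_gt0) [lam * _]mulrA eigen_i mulr_suml [X in _ <= X](bigD1 i) //=.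
rewrite mulrBl mulr_suml.
apply: lerD; first by rewrite mulrA [a * _]mulrC.
rewrite -sumrN; apply: ler_sum => j _.
have : `|v 0 j * A j i * a| <= `|A j i| * (a * a).
  rewrite !normrM -[a * a]ger0_norm ?normrM; last exact: ltW.
  rewrite mulrA; apply: ler_wpM2r => //; rewrite mulrC.
  by apply: ler_wpM2l => //; apply: vi_max.
by rewrite ler_norml => /andP[].
Qed.

Lemma switch_mx_row_bound (R : realFieldType) n d (i : 'I_#|{: Omega n d}|) :
  (0 < n)%N -> (0 < d)%N ->
  4%:R / ((d * n) * (d * n).-1)%:R - 1 <=
    switch_mx R n d i i - \sum_(j | j != i) `|switch_mx R n d i j| :> R.
Proof.
move=> n_gt0 d_gt0; set M := ((d * n) * (d * n).-1)%N.
set G := val (enum_val i); have G_reg : is_regdigraph n d G := valP (enum_val i).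
set c := nswitch G G.
pose row_sum := (\sum_(j < #|{: Omega n d}|) nswitch G (val (enum_val j)))%N.
have c_ge2 : (2 <= c)%N := nswitch_self_ge2 n_gt0 d_gt0 G_reg.
have row_sum_le : (row_sum <= M)%N.
  rewrite /row_sum -(big_enum_val (fun H : Omega n d => nswitch G (val H))) /=.
  by rewrite /M -(card_regdigraph G_reg) (eq_bigl xpredT) ?sum_nswitch_le.
have row_sumE : row_sum = (c + \sum_(j | j != i) nswitch G (val (enum_val j)))%N.
  by rewrite /row_sum (bigD1 i).
have M_gt0 : (0 < M)%N.
  by rewrite (leq_trans _ row_sum_le) // row_sumE ltn_addr // (leq_trans _ c_ge2).
have entryE j : switch_mx R n d i j = (nswitch G (val (enum_val j)))%:R / M%:R.
  by rewrite mxE.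
have offdiagE : \sum_(j | j != i) `|switch_mx R n d i j| = (row_sum - c)%N%:R / M%:R.
  rewrite row_sumE addKn natr_sum mulr_suml; apply: eq_bigr => j _.
  by rewrite entryE ger0_norm // divr_ge0.
have M_neq0 : M%:R != 0 :> R by rewrite pnatr_eq0 -lt0n.
rewrite offdiagE entryE -/c [X in _ - X <= _](esym (divff M_neq0)) -!mulrBl.
rewrite ler_pM2r ?invr_gt0 ?ltr0n // natrB ?row_sumE ?leq_addr // -row_sumE.
have : 2%:R <= c%:R :> R by rewrite ler_nat.
have : row_sum%:R <= M%:R :> R by rewrite ler_nat.
lra.
Qed.

Theorem mainTheorem7 (R : rcfType) (n d : nat) :
  (4 <= n)%N -> (1 <= d <= n - 1)%N ->
  forall lambda : R, eigenvalue (switch_mx R n d) lambda ->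
    0 < 1 + lambda /\ (1 + lambda)^-1 <= (d ^ 2 * n ^ 2)%:R / 4%:R.
Proof.
move=> n_ge4 /andP[d_gt0 _] lam /eigenvalue_trmx /gershgorin_col_lower[i].
set P := switch_mx R n d; set M := ((d * n) * (d * n).-1)%N.
rewrite mxE (eq_bigr (fun j => `|P i j|)) => [excess_le|j _]; last by rewrite mxE.
have M_gt0 : (0 < M)%N.
  have dn_ge4 : (4 <= d * n)%N by rewrite (leq_trans n_ge4) ?leq_pmull.
  by rewrite muln_gt0 (leq_trans _ dn_ge4) // -ltnS prednK (leq_trans _ dn_ge4).
have lower : 4%:R / M%:R <= 1 + lam.
  rewrite -lerBlDl; apply: le_trans excess_le.
  exact: switch_mx_row_bound (leq_trans _ n_ge4) d_gt0.
have bound_gt0 : 0 < 4%:R / M%:R :> R by rewrite divr_gt0 ?ltr0n.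
split; first exact: lt_le_trans lower.
apply: le_trans (_ : (4%:R / M%:R)^-1 <= _).
  by rewrite lef_pV2 ?posrE // (lt_le_trans bound_gt0).
rewrite invf_div ler_pM2r ?invr_gt0 ?ltr0n // ler_nat -expnMn.
by rewrite /M -mulnn leq_mul2l leq_pred orbT.
Qed.
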